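(* Consider a market with $n$ buyers, $m$ items and $T$ time periods, where item $j$ has per-period supply $s_j^t\ge0$ and overall supply $s_j\ge0$. Every buyer has budget $B_i=1$ and binary valuations $v_{ij}\in\{0,1\}$, and buyer $i$ has per-period demands $d_i^t\ge0$. A feasible allocation is $x=(x_{ij}^t)\ge0$ with $\sum_i x_{ij}^t\le s_j^t$ for all $j,t$ and $\sum_{t,i}x_{ij}^t\le s_j$ for all $j$; let $u_i^t(x_i^t)=\sum_j v_{ij}x_{ij}^t-d_i^t$. Assume there is a feasible allocation with $u_i^t(x_i^t)>0$ for all $i,t$. Then the set of leximin-optimal feasible allocations coincides with the set of maximum Nash welfare allocations, i.e. the optimal solutions of $$\max_{x\ge0}\sum_i\frac1T\sum_t\log\Big(\sum_j v_{ij}x_{ij}^t-d_i^t\Big)\ \text{ over feasible allocations}.$$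
   Context: Leximin order: for vectors $v,\tilde v$ of equal length with nondecreasing rearrangements $v^*,\tilde v^*$, $v$ is leximin-greater than $\tilde v$ if there is $k$ with $v^*_l=\tilde v^*_l$ for $l<k$ and $v^*_k>\tilde v^*_k$. Here a feasible allocation $x$ is leximin-optimal if no feasible $\tilde x$ has the vector $(u_i^t(\tilde x_i^t))_{i,t}$ (indexed by all buyer–period pairs) leximin-greater than $(u_i^t(x_i^t))_{i,t}$. *)

From HB Require Import structures.
From mathcomp Require Import all_boot all_order all_algebra.
From mathcomp Require Import reals exp.
Set Implicit Arguments. Unset Strict Implicit. Unset Printing Implicit Defensive.
Import Order.TTheory GRing.Theory Num.Theory.
Local Open Scope ring_scope.

Section Market.
Variables (R : realType) (n m T : nat).

Definition alloc := 'I_n -> 'I_m -> 'I_T -> R.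

Definition feasible (sp : 'I_m -> 'I_T -> R) (s : 'I_m -> R) (x : alloc) : Prop :=
  [/\ forall i j t, 0 <= x i j t,
      forall j t, \sum_(i < n) x i j t <= sp j t
    & forall j, \sum_(t < T) \sum_(i < n) x i j t <= s j].

Definition util (v : 'I_n -> 'I_m -> R) (d : 'I_n -> 'I_T -> R) (x : alloc)
  (i : 'I_n) (t : 'I_T) : R := \sum_(j < m) v i j * x i j t - d i t.

Definition utilvec v d (x : alloc) : seq R :=
  [seq util v d x p.1 p.2 | p : 'I_n * 'I_T].

Definition leximin_gt (a b : seq R) : Prop :=
  let a' := sort <=%R a in let b' := sort <=%R b in
  exists k : nat, (k < size a')%N /\
    (forall l, (l < k)%N -> nth 0 a' l = nth 0 b' l) /\ nth 0 b' k < nth 0 a' k.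

Definition leximin_optimal v d sp s (x : alloc) : Prop :=
  feasible sp s x /\
  ~ (exists y : alloc, feasible sp s y /\ leximin_gt (utilvec v d y) (utilvec v d x)).

(* Nash welfare objective  sum_i (1/T) sum_t log u_i^t ; log is only defined on
   positive utilities, log(u) = -oo for u <= 0 *)
Definition all_pos v d (x : alloc) : Prop := forall i t, 0 < util v d x i t.

Definition nash_welfare v d (x : alloc) : R :=
  \sum_(i < n) (T%:R)^-1 * \sum_(t < T) ln (util v d x i t).

Definition max_nash_welfare v d sp s (x : alloc) : Prop :=
  [/\ feasible sp s x, all_pos v d x &
      forall y : alloc, feasible sp s y -> all_pos v d y ->
        nash_welfare v d y <= nash_welfare v d x].

End Market.

From HB Require Import structures.
From mathcomp Require Import all_boot all_order all_algebra.
From mathcomp Require Import boolp reals exp.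
From mathcomp Require Import ring lra.
Import Order.TTheory GRing.Theory Num.Theory.
Local Open Scope ring_scope.
Set Implicit Arguments. Unset Strict Implicit. Unset Printing Implicit Defensive.

(* Both optimality notions are equivalent to one combinatorial property of a
   feasible allocation x: for every lower set A of its utility profile (every
   utility in A is below every utility outside A), x maximises the total
   utility of A over all feasible allocations.

   Leximin and Nash optimal allocations admit neither of two elementary
   improvements: raising a single utility, and moving utility from a richer to
   a poorer buyer-period (by convexity, small such moves are always available).
   Conversely, with binary valuations an allocation admitting neither has the
   lower-set property, by a cut argument: call item j in period t demanded when
   relaxing its supply would let a member of A gain while nobody else changes.
   Every item valued by a member of A is demanded, x gives demanded items only
   to members of A valuing them, and x exhausts their supply; so the value of
   A under any feasible allocation is at most the supply of demanded items,
   which x attains.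

   The lower-set property gives leximin optimality by comparing the utilities
   truncated at the level where a competitor first exceeds x, and Nash
   optimality by concavity of ln and Abel summation over the lower sets. *)

(** * Sorted sequences and the leximin order *)

Section SortedCount.
Context {disp : Order.disp_t} {T : orderType disp} (x0 : T).
Implicit Types (s t : seq T) (P : pred T).

Definition down_closed P := forall x y, (x <= y)%O -> P y -> P x.

Lemma sorted_nth_count P s l : sorted <=%O s -> down_closed P -> (l < size s)%N ->
  P (nth x0 s l) = (l < count P s)%N.
Proof.
move=> + dP; elim: s l => [|x s IH] l //= xs ls.
case Px: (P x).
  by case: l ls => [|l] /= ls; rewrite ?Px // add1n ltnS IH ?(path_sorted xs).
have notP y : y \in x :: s -> ~~ P y.
  rewrite inE => /predU1P[-> | ys]; first by rewrite Px.
  by apply/negP => /(dP x y (allP (le_path_min xs) y ys)); rewrite Px.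
have /hasPn := notP; rewrite has_count -leqNgt leqn0 /= Px => /eqP ->.
by rewrite (negbTE (notP _ (mem_nth x0 (ls : (l < size (x :: s))%N)))).
Qed.

Lemma sorted_nth_eq s t l : sorted <=%O s -> sorted <=%O t ->
  (l < size s)%N -> (l < size t)%N ->
  (forall r, (l < count (fun y => y < r)%O s) = (l < count (fun y => y < r)%O t))%N ->
  nth x0 s l = nth x0 t l.
Proof.
move=> ss st ls lt eqc.
have dlt r : down_closed (fun y => y < r)%O by move=> y z yz zr; exact: le_lt_trans yz zr.
apply/eqP; rewrite eq_le !leNgt; apply/andP; split; apply/negP => lt_nth.
- by have := eqc (nth x0 s l); rewrite -!sorted_nth_count // ltxx lt_nth.
- by have := eqc (nth x0 t l); rewrite -!sorted_nth_count // ltxx lt_nth.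
Qed.

End SortedCount.

Lemma sub_count_lt (X : eqType) (P Q : pred X) s z : subpred P Q ->
  z \in s -> Q z -> ~~ P z -> (count P s < count Q s)%N.
Proof.
move=> PQ zs Qz nPz; rewrite -[count Q s]size_filter -(count_predC P) count_filter.
rewrite (eq_count (a2 := P)) => [|y]; last by rewrite /= andb_idr //; exact: PQ.
rewrite -{1}[count P s]addn0 ltn_add2l -has_count; apply/hasP.
by exists z; rewrite ?mem_filter ?Qz.
Qed.

Section Leximin.
Variable R : realType.
Implicit Types (a b : seq R).

(* Since [(nth 0 (sort a) l < r) = (l < count (< r) a)], the second hypothesis says
   that the sorted sequences agree below position [k]. *)
Lemma leximin_gt_by_count a b k (c : R) : size a = size b ->
  (forall (r : R) l, (l < k)%N ->
     (l < count (fun y => (y < r)%R) a)%N = (l < count (fun y => (y < r)%R) b)%N) ->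
  (count (fun y => (y <= c)%R) a <= k)%N -> (k < count (fun y => (y <= c)%R) b)%N ->
  leximin_gt a b.
Proof.
move=> sab pre ca cb; rewrite /leximin_gt.
have ka : (k < size a)%N by rewrite sab; exact: leq_trans cb (count_size _ _).
have dle : down_closed (fun y : R => y <= c) by move=> y z /le_trans; apply.
exists k; split; first by rewrite size_sort.
split=> [l lk|].
  have la : (l < size a)%N := ltn_trans lk ka.
  apply: sorted_nth_eq; rewrite ?size_sort -?sab // => r.
  by rewrite !count_sort; exact: pre.
have ka' : (k < size (sort <=%R a))%N by rewrite size_sort.
have kb' : (k < size (sort <=%R b))%N by rewrite size_sort -sab.
have := sorted_nth_count 0 (sort_le_sorted b) dle kb'.
have := sorted_nth_count 0 (sort_le_sorted a) dle ka'.
rewrite !count_sort ltnNge ca cb /= => /negbT; rewrite -ltNge.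
by move=> ca_lt /le_lt_trans; apply.
Qed.

Lemma leximin_gt_threshold a b : size a = size b -> leximin_gt a b ->
  exists c, \sum_(y <- a) Num.min y c = \sum_(y <- b) Num.min y c /\
            (count (fun y => (y <= c)%R) a < count (fun y => (y <= c)%R) b)%N.
Proof.
rewrite /leximin_gt; set a' := sort _ a; set b' := sort _ b => sab [k [ka [pre lt_k]]].
have sa : sorted <=%O a' := sort_le_sorted a.
have sb : sorted <=%O b' := sort_le_sorted b.
have sab' : size a' = size b' by rewrite !size_sort.
have kb : (k < size b')%N by rewrite -sab'.
exists (nth 0 b' k); split.
  have [pa pb] : perm_eq a' a /\ perm_eq b' b by rewrite !perm_sort.
  rewrite -(perm_big _ pa) -(perm_big _ pb).
  rewrite (big_nth 0) [RHS](big_nth 0) !big_mkord sab'; apply: eq_bigr => -[l lb] _ /=.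
  have la : (l < size a')%N by rewrite sab'.
  case: (ltnP l k) => [lk | kl]; first by rewrite pre.
  rewrite !min_r //; first exact: (le_sorted_leq_nth 0 sb kb lb kl).
  exact/ltW/(lt_le_trans lt_k)/(le_sorted_leq_nth 0 sa ka la kl).
have dle : down_closed (fun y : R => y <= nth 0 b' k) by move=> y z /le_trans; apply.
rewrite -(count_sort <=%R _ a) -(count_sort <=%R _ b) -/a' -/b'.
have := sorted_nth_count 0 sb dle kb; have := sorted_nth_count 0 sa dle ka.
rewrite lexx leNgt lt_k => /esym/negbT; rewrite -leqNgt => ca /esym cb.
exact: leq_ltn_trans ca cb.
Qed.

Lemma leximin_gt_raise (I : finType) (f g : I -> R) c z :
  (forall p, f p = g p \/ c <= f p /\ c < g p) -> f z = c -> c < g z ->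
  leximin_gt [seq g p | p : I] [seq f p | p : I].
Proof.
move=> fg fz gz; rewrite /image_mem; set e := enum_mem _.
have gf_le p : g p <= c -> f p <= c.
  by case: (fg p) => [-> // | [_ /lt_geF ->]].
have ze : z \in e by rewrite mem_enum.
apply: (leximin_gt_by_count (k := count (fun y => y <= c) (map g e)) (c := c)).
- by rewrite !size_map.
- move=> r l lk; case: (leP r c) => [rc | cr].
    congr (_ < _)%N; rewrite !count_map; apply: eq_count => p /=.
    case: (fg p) => [-> // | [fp gp]].
    by rewrite !le_gtF // (le_trans rc) // ltW.
  have le_cr (h : I -> R) :
      (count (fun y => (y <= c)%R) (map h e) <= count (fun y => (y < r)%R) (map h e))%N.
    by apply: sub_count => y /le_lt_trans; apply.
  have le_gf :
      (count (fun y => (y <= c)%R) (map g e) <= count (fun y => (y <= c)%R) (map f e))%N.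
    by rewrite !count_map; apply: sub_count => p /=; exact: gf_le.
  by rewrite (leq_trans lk (le_cr g)) (leq_trans lk (leq_trans le_gf (le_cr f))).
- by [].
- rewrite (@count_map _ _ g) (@count_map _ _ f).
  apply: (@sub_count_lt _ (preim g (fun y => y <= c)) (preim f (fun y => y <= c)) _ z gf_le ze).
    by rewrite /= fz.
  by rewrite /= -ltNge.
Qed.

End Leximin.

(** * Abel summation over lower sets *)

Section LowerSets.
Variables (R : realDomainType) (I : finType).
Implicit Types (u h D : I -> R) (A S : {set I}).

Definition lower_set u A := forall a b, a \in A -> b \notin A -> u a < u b.

Lemma lower_setT u : lower_set u [set: I].
Proof. by move=> a b _; rewrite in_setT. Qed.

Lemma weighted_sum_lower_set_le0 u h D S :
  (forall A, lower_set u A -> \sum_(p in A) D p <= 0) ->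
  (forall p q, u p <= u q -> h q <= h p) ->
  lower_set u S -> {in S, forall p, 0 <= h p} ->
  \sum_(p in S) h p * D p <= 0.
Proof.
move=> HD; have [N leSN] : exists N, (#|S| <= N)%N by exists #|S|.
elim: N S h leSN => [|N IH] S h leSN h_anti lowS h_ge0.
  by move: leSN; rewrite leqn0 cards_eq0 => /eqP ->; rewrite big_set0.
case: (set_0Vmem S) => [->|[q0 q0S]]; first by rewrite big_set0.
case: (@arg_maxP _ _ I q0 (mem S) u q0S) => q qS q_max.
(* Write h = h q + (h - h q) on S: the constant part is handled by S itself, and
   h - h q vanishes on the top level of S, leaving the smaller lower set S'. *)
set S' := [set p in S | u p < u q].
have lowS' : lower_set u S'.
  move=> a b; rewrite !inE => /andP[aS aq]; rewrite negb_and => /orP[bS|].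
    exact: lowS.
  by rewrite -leNgt; exact: lt_le_trans.
have ltS' : (#|S'| < #|S|)%N.
  apply: proper_card; apply/properP; split.
    by apply/subsetP => p; rewrite inE => /andP[].
  by exists q => //; rewrite inE ltxx andbF.
have top_le0 : h q * \sum_(p in S) D p <= 0 by rewrite mulr_ge0_le0 ?h_ge0 ?HD.
have rest_eq : \sum_(p in S) (h p - h q) * D p = \sum_(p in S') (h p - h q) * D p.
  rewrite (bigID (fun p => u p < u q)) /= [X in _ + X]big1 ?addr0.
    by apply: eq_bigl => p; rewrite inE.
  move=> p /andP[pS]; rewrite -leNgt => qp.
  suff -> : h p = h q by rewrite subrr mul0r.
  by apply/eqP; rewrite eq_le (h_anti _ _ qp) h_anti //; exact: q_max.
have rest_le0 : \sum_(p in S') (h p - h q) * D p <= 0.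
  apply: IH; first by rewrite -ltnS (leq_trans ltS' leSN).
  - by move=> p p' /h_anti; rewrite lerD2r.
  - exact: lowS'.
  - by move=> p; rewrite inE subr_ge0 => /andP[_ /ltW /h_anti].
rewrite (eq_bigr (fun p => h q * D p + (h p - h q) * D p)) => [|p _]; last first.
  by rewrite mulrBl addrC subrK.
by rewrite big_split /= -mulr_sumr rest_eq; lra.
Qed.

Lemma weighted_sum_le0 u h D :
  (forall A, lower_set u A -> \sum_(p in A) D p <= 0) ->
  (forall p, 0 <= h p) -> (forall p q, u p <= u q -> h q <= h p) ->
  \sum_p h p * D p <= 0.
Proof.
move=> HD h_ge0 h_anti; rewrite -(eq_bigl _ _ (in_set predT)).
by apply: weighted_sum_lower_set_le0 (lower_setT u) _ => // p _.
Qed.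

End LowerSets.

(** * Allocations *)

Lemma sum_mix (R : comPzRingType) (J : finType) (a b : J -> R) l :
  \sum_k (a k + l * (b k - a k)) = \sum_k a k + l * (\sum_k b k - \sum_k a k).
Proof. by rewrite big_split /= -sumrB mulr_sumr. Qed.

Lemma sum_if_eq (R : nmodType) (J : finType) (j0 : J) (F : J -> R) (b : bool) :
  \sum_j (if b && (j == j0) then F j else 0) = if b then F j0 else 0.
Proof.
case: b => /=; last by rewrite big1.
by rewrite (bigD1 j0) //= eqxx big1 ?addr0 // => j /negbTE ->.
Qed.

Lemma mix_le (R : realDomainType) (P1 P2 S1 S2 l : R) : 0 <= l -> l <= 1 ->
  P1 <= S1 -> P2 <= S2 -> P1 + l * (P2 - P1) <= S1 + l * (S2 - S1).
Proof.
move=> l0 l1 h1 h2.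
have : 0 <= (1 - l) * (S1 - P1) by apply: mulr_ge0; lra.
have : 0 <= l * (S2 - P2) by apply: mulr_ge0; lra.
nra.
Qed.

Lemma small_step (R : realFieldType) (D K : R) : 0 < D -> 0 <= K ->
  exists l, [/\ 0 < l, l <= 1 & l * (D + K) <= D].
Proof.
move=> D0 K0; have DK0 : 0 < D + K by lra.
exists (D / (D + K)); split; last by rewrite divfK ?gt_eqF.
  exact: divr_gt0.
by rewrite ler_pdivrMr // mul1r; lra.
Qed.

Section Allocations.
Variables (R : realType) (n m T : nat).
Implicit Types (x y : alloc R n m T) (sp : 'I_m -> 'I_T -> R) (s : 'I_m -> R).

Definition period x j t := \sum_(i < n) x i j t.
Definition total x j := \sum_(t < T) period x j t.

Definition mix x y l : alloc R n m T := fun i j t => x i j t + l * (y i j t - x i j t).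

Definition bump x (i0 : 'I_n) (j0 : 'I_m) (t0 : 'I_T) (e : R) : alloc R n m T :=
  fun i j t => x i j t + (if (i == i0) && (j == j0) && (t == t0) then e else 0).

Definition sp_relax sp j0 t0 e : 'I_m -> 'I_T -> R :=
  fun j t => sp j t + (if (j == j0) && (t == t0) then e else 0).
Definition s_relax s j0 e : 'I_m -> R := fun j => s j + (if j == j0 then e else 0).

Lemma period_mix x y l j t :
  period (mix x y l) j t = period x j t + l * (period y j t - period x j t).
Proof. exact: sum_mix. Qed.

Lemma total_mix x y l j : total (mix x y l) j = total x j + l * (total y j - total x j).
Proof. by rewrite -sum_mix; apply: eq_bigr => t _; rewrite period_mix. Qed.

Lemma period_bump x i0 j0 t0 e j t :
  period (bump x i0 j0 t0 e) j t = period x j t + (if (j == j0) && (t == t0) then e else 0).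
Proof.
rewrite /period /bump big_split /= -(sum_if_eq i0 (fun=> e)).
by congr (_ + _); apply: eq_bigr => i _; rewrite [(_ && _) && (i == i0)]andbC andbA.
Qed.

Lemma total_bump x i0 j0 t0 e j :
  total (bump x i0 j0 t0 e) j = total x j + (if j == j0 then e else 0).
Proof.
rewrite /total (eq_bigr _ (fun t _ => period_bump x i0 j0 t0 e j t)) big_split /=.
by rewrite sum_if_eq.
Qed.

Lemma feasible_le sp s sp' s' x : feasible sp s x ->
  (forall j t, sp j t <= sp' j t) -> (forall j, s j <= s' j) -> feasible sp' s' x.
Proof.
case=> x0 xsp xs lesp les; split=> // [j t|j].
  exact: le_trans (lesp j t).
exact: le_trans (les j).
Qed.

Lemma feasible_usage sp s x : feasible sp s x -> feasible (period x) (total x) x.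
Proof. by case. Qed.

Lemma feasible_mix sp1 s1 sp2 s2 x y l : 0 <= l -> l <= 1 ->
  feasible sp1 s1 x -> feasible sp2 s2 y ->
  feasible (fun j t => sp1 j t + l * (sp2 j t - sp1 j t)) (fun j => s1 j + l * (s2 j - s1 j))
    (mix x y l).
Proof.
move=> l0 l1 [x0 xsp xs] [y0 ysp ys]; split=> [i j t|j t|j].
- by have := mix_le l0 l1 (x0 i j t) (y0 i j t); rewrite subrr mulr0 addr0.
- by move: (mix_le l0 l1 (xsp j t) (ysp j t)); rewrite -period_mix.
- by move: (mix_le l0 l1 (xs j) (ys j)); rewrite -total_mix.
Qed.

Lemma feasible_bump sp s x i0 j0 t0 e : feasible sp s x -> 0 <= x i0 j0 t0 + e ->
  feasible (sp_relax sp j0 t0 e) (s_relax s j0 e) (bump x i0 j0 t0 e).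
Proof.
move=> [x0 xsp xs] xe; split=> [i j t|j t|j].
- rewrite /bump; case: ifP => [/andP[/andP[/eqP-> /eqP->] /eqP->] //|_].
  by rewrite addr0.
- move: (xsp j t); rewrite -(lerD2r (if (j == j0) && (t == t0) then e else 0)).
  by rewrite -(period_bump x i0).
- by move: (xs j); rewrite -(lerD2r (if j == j0 then e else 0)) -(total_bump x i0 j0 t0).
Qed.

Lemma feasible_convex sp s x y l : 0 <= l -> l <= 1 ->
  feasible sp s x -> feasible sp s y -> feasible sp s (mix x y l).
Proof.
move=> l0 l1 xf yf; apply: feasible_le (feasible_mix l0 l1 xf yf) _ _ => *;
  by rewrite subrr mulr0 addr0.
Qed.

End Allocations.

(** * Optimality in the market *)

Lemma ln_sub_le (R : realType) (x y : R) : 0 < x -> 0 < y -> ln y - ln x <= (y - x) / x.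
Proof.
move=> x0 y0; have yx : y / x = 1 + (y - x) / x by field; rewrite gt_eqF.
rewrite -ln_div ?posrE // yx; apply: le_ln1Dx.
by have := divr_gt0 y0 x0; rewrite yx; lra.
Qed.

Section Market.
Variables (R : realType) (n m T : nat).
Variables (v : 'I_n -> 'I_m -> R) (d : 'I_n -> 'I_T -> R).
Variables (sp : 'I_m -> 'I_T -> R) (s : 'I_m -> R).

Local Notation I := ('I_n * 'I_T)%type.
Implicit Types (x y z : alloc R n m T) (p : I).

Definition U x p := util v d x p.1 p.2.

Definition raise (f : I -> R) a e p := f p + (if p == a then e else 0).

Lemma U_mix x y l p : U (mix x y l) p = U x p + l * (U y p - U x p).
Proof.
rewrite /U /util /mix.
under eq_bigr do rewrite mulrDr mulrA [_ * l]mulrC -mulrA mulrBr.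
by rewrite sum_mix; ring.
Qed.

Lemma U_bump x i0 j0 t0 e p : U (bump x i0 j0 t0 e) p = raise (U x) (i0, t0) (v i0 j0 * e) p.
Proof.
rewrite /U /util /bump /raise; under eq_bigr do rewrite mulrDr.
rewrite big_split /= addrAC; congr (_ + _).
case: p => i t /=; rewrite xpair_eqE.
rewrite (eq_bigr (fun j => if (i == i0) && (t == t0) && (j == j0) then v i j * e else 0)).
  by rewrite sum_if_eq; case: eqP => [-> //|].
by move=> j _; case: (i == i0); case: (j == j0); case: (t == t0); rewrite /= ?mulr0.
Qed.

Definition pareto_improvable x := exists x' a e,
  [/\ feasible sp s x', 0 < e & U x' =1 raise (U x) a e].

Definition transfer_improvable x := exists x' a b e,
  [/\ feasible sp s x', 0 < e, U x a < U x b & U x' =1 raise (raise (U x) a e) b (- e)].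

Lemma transfer_improvable_small x : feasible sp s x -> transfer_improvable x ->
  exists x' a b e, [/\ feasible sp s x', 0 < e, U x a + e < U x b &
                       U x' =1 raise (raise (U x) a e) b (- e)].
Proof.
move=> xf [x' [a [b [e [x'f e0 ab gain]]]]].
have ab_pos : 0 < U x b - U x a by rewrite subr_gt0.
have [l [l0 l1 le_l]] := small_step ab_pos (ltW e0).
exists (mix x x' l), a, b, (l * e); split.
- exact: feasible_convex (ltW l0) l1 xf x'f.
- exact: mulr_gt0.
- nra.
- move=> p; rewrite U_mix gain /raise.
  by case: (p == a); case: (p == b) => /=; ring.
Qed.

Lemma leximin_optimal_all_pos x : (exists y, feasible sp s y /\ all_pos v d y) ->
  leximin_optimal v d sp s x -> all_pos v d x.
Proof.
move=> [y [yf ypos]] [xf xopt] i t; rewrite ltNge; apply/negP => xit_le0.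
have [a _ a_min] := @arg_minP _ _ I (i, t) predT (U x) isT.
have ya p : U x a < U y p.
  exact: le_lt_trans (le_trans (a_min (i, t) isT) xit_le0) (ypos p.1 p.2).
apply: xopt; exists y; split=> //.
apply: (@leximin_gt_raise _ _ (U x) (U y) (U x a) a) => [p|//|]; last exact: ya.
by right; rewrite a_min ?ya.
Qed.

Lemma leximin_optimal_not_pareto x :
  leximin_optimal v d sp s x -> ~ pareto_improvable x.
Proof.
move=> [xf xopt] [x' [a [e [x'f e0 gain]]]]; apply: xopt; exists x'; split=> //.
apply: (@leximin_gt_raise _ _ (U x) (U x') (U x a) a); rewrite ?gain /raise ?eqxx //.
- by move=> p; rewrite gain /raise; case: eqP => [->|_]; [right; lra | left; rewrite addr0].
- by rewrite ltrDl.
Qed.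

Lemma leximin_optimal_not_transfer x :
  leximin_optimal v d sp s x -> ~ transfer_improvable x.
Proof.
move=> xlex /(transfer_improvable_small xlex.1) [x' [a [b [e [x'f e0 ab gain]]]]].
have [_ xopt] := xlex; apply: xopt; exists x'; split=> //.
have /negbTE ab_neq : a != b by apply: contraTneq ab => ->; lra.
apply: (@leximin_gt_raise _ _ (U x) (U x') (U x a) a); rewrite ?gain /raise ?eqxx ?ab_neq //.
- move=> p; rewrite gain /raise; case: eqP => [->|_]; first by right; rewrite ab_neq; lra.
  by case: eqP => [->|_]; [right; lra | left; rewrite !addr0].
- lra.
Qed.

Lemma nash_welfareE z : nash_welfare v d z = T%:R^-1 * \sum_p ln (U z p).
Proof. by rewrite /nash_welfare -mulr_sumr pair_bigA. Qed.

Lemma max_nash_welfare_sum_ln x y : max_nash_welfare v d sp s x -> (0 < T)%N ->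
  feasible sp s y -> all_pos v d y -> \sum_p ln (U y p) <= \sum_p ln (U x p).
Proof.
move=> [_ _ xmax] T0 yf ypos; have := xmax y yf ypos.
by rewrite !nash_welfareE ler_pM2l // invr_gt0 ltr0n.
Qed.

Lemma max_nash_welfare_not_pareto x :
  max_nash_welfare v d sp s x -> ~ pareto_improvable x.
Proof.
move=> xmax [x' [a [e [x'f e0 gain]]]]; have [_ xpos _] := xmax.
have le_x' p : U x p <= U x' p by rewrite gain /raise; case: eqP => _; lra.
have x'pos : all_pos v d x' by move=> i t; exact: lt_le_trans (xpos i t) (le_x' (i, t)).
have := max_nash_welfare_sum_ln xmax (leq_ltn_trans (leq0n _) (ltn_ord a.2)) x'f x'pos.
apply/negP; rewrite -ltNge (bigD1 a) //= [X in _ < X](bigD1 a) //=.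
have [xpos' x'pos'] : (forall p, 0 < U x p) /\ (forall p, 0 < U x' p) by split=> -[].
apply: ltr_leD; first by rewrite ltr_ln ?posrE // gain /raise eqxx ltrDl.
by apply: ler_sum => p _; rewrite ler_ln ?posrE.
Qed.

Lemma max_nash_welfare_not_transfer x :
  max_nash_welfare v d sp s x -> ~ transfer_improvable x.
Proof.
move=> xmax; have [xf xpos _] := xmax.
move=> /(transfer_improvable_small xf) [x' [a [b [e [x'f e0 ab gain]]]]].
have xpos' p : 0 < U x p by case: p.
have ab_neq : a != b by apply: contraTneq ab => ->; lra.
have x'pos' p : 0 < U x' p.
  rewrite gain /raise; case: eqP => [->|_].
    by rewrite (negbTE ab_neq); have := xpos' a; lra.
  by case: eqP => [->|_]; have := xpos' a; have := xpos' p; lra.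
(* (A + e) (B - e) - A B = e (B - A - e) > 0 *)
have key : ln (U x a) + ln (U x b) < ln (U x' a) + ln (U x' b).
  rewrite -!lnM ?posrE // ltr_ln ?posrE ?mulr_gt0 //.
  rewrite !gain /raise eqxx (negbTE ab_neq) eq_sym (negbTE ab_neq) eqxx; nra.
have rest : \sum_(p | (p != a) && (p != b)) ln (U x' p) =
            \sum_(p | (p != a) && (p != b)) ln (U x p).
  by apply: eq_bigr => p /andP[pa pb]; rewrite gain /raise (negbTE pa) (negbTE pb) !addr0.
have := max_nash_welfare_sum_ln xmax (leq_ltn_trans (leq0n _) (ltn_ord a.2)) x'f
  (fun i t => x'pos' (i, t)).
rewrite (bigD1 a) // (bigD1 b) 1?eq_sym //= [X in _ <= X](bigD1 a) // (bigD1 b) 1?eq_sym //=.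
rewrite rest; lra.
Qed.

Definition lower_sets_optimal x := forall A, lower_set (U x) A ->
  forall y, feasible sp s y -> \sum_(p in A) U y p <= \sum_(p in A) U x p.

Section Cut.
Hypothesis hv : forall i j, v i j = 0 \/ v i j = 1.
Variables (x : alloc R n m T) (A : {set I}).
Hypotheses (xf : feasible sp s x) (lowA : lower_set (U x) A).
Hypotheses (x_npar : ~ pareto_improvable x) (x_ntr : ~ transfer_improvable x).

Definition raises_A x' e := exists2 a, a \in A & U x' =1 raise (U x) a e.

Definition demanded j t := exists x' e,
  [/\ 0 < e, raises_A x' e & feasible (sp_relax sp j t e) (s_relax s j e) x'].

Definition total_demanded j := exists x' e,
  [/\ 0 < e, raises_A x' e & feasible sp (s_relax s j e) x'].

Lemma raises_A_mix x' e l : raises_A x' e -> raises_A (mix x x' l) (l * e).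
Proof.
by case=> a aA gain; exists a => // p; rewrite U_mix gain /raise; case: (p == a) => /=; ring.
Qed.

Lemma demanded_of_A i j t : (i, t) \in A -> v i j = 1 -> demanded j t.
Proof.
move=> itA vij; exists (bump x i j t 1), 1; split=> //.
  by exists (i, t) => // p; rewrite U_bump vij mulr1.
by apply: feasible_bump => //; case: xf => x0 _ _; have := x0 i j t; lra.
Qed.

Lemma demanded_alloc i j t : demanded j t -> 0 < x i j t -> v i j = 1 /\ (i, t) \in A.
Proof.
move=> [x' [e [e0 [a aA gain] x'f]]] xijt.
have [l [l0 l1 le_l]] := small_step xijt (ltW e0).
set z := bump (mix x x' l) i j t (- (l * e)).
have zf : feasible sp s z.
  have [[x0 _ _] [x'0 _ _]] := (xf, x'f).
  have z0 : 0 <= mix x x' l i j t + - (l * e).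
    by rewrite /mix; have := x'0 i j t; have := x0 i j t; nra.
  apply: feasible_le (feasible_bump (feasible_mix (ltW l0) l1 xf x'f) z0) _ _ => [j' t'|j'].
    by rewrite /sp_relax; case: (_ && _) => /=; lra.
  by rewrite /s_relax; case: (_ == _) => /=; lra.
have gz p : U z p = raise (raise (U x) a (l * e)) (i, t) (v i j * - (l * e)) p.
  by rewrite U_bump /raise U_mix gain /raise; case: (p == a); case: (p == (i, t)) => /=; ring.
have le0 : 0 < l * e by exact: mulr_gt0.
case: (hv i j) => vij.
  exfalso; apply: x_npar; exists z, a, (l * e); split=> // p.
  by rewrite gz vij mul0r {1}/raise; case: (_ == _); rewrite addr0.
split=> //; apply/negPn/negP => itA.
apply: x_ntr; exists z, a, (i, t), (l * e); split=> //; first exact: lowA.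
by move=> p; rewrite gz vij mul1r.
Qed.

Lemma total_demanded_of_slack j t : demanded j t -> period x j t < sp j t -> total_demanded j.
Proof.
move=> [x' [e [e0 gainA x'f]]]; rewrite -subr_gt0 => slack.
have [l [l0 l1 le_l]] := small_step slack (ltW e0).
exists (mix x x' l), (l * e); split; [exact: mulr_gt0 | exact: raises_A_mix |].
have xsp j' t' : period x j' t' <= sp j' t' by case: xf => _ + _; apply.
have xs j' : total x j' <= s j' by case: xf => _ _; apply.
apply: feasible_le (feasible_mix (ltW l0) l1 (feasible_usage xf) x'f) _ _ => [j' t'|j'].
  rewrite /sp_relax; case: (boolP (_ && _)) => [/andP[/eqP-> /eqP->]|_] /=; first nra.
  by have := xsp j' t'; nra.
by rewrite /s_relax; have := xs j'; case: (_ == _) => /=; nra.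
Qed.

Lemma total_demanded_tight j : total_demanded j -> total x j = s j.
Proof.
move=> [x' [e [e0 gainA x'f]]].
have xsp j' t' : period x j' t' <= sp j' t' by case: xf => _ + _; apply.
have xs j' : total x j' <= s j' by case: xf => _ _; apply.
apply/eqP; rewrite eq_le xs /= leNgt; apply/negP; rewrite -subr_gt0 => slack.
have [l [l0 l1 le_l]] := small_step slack (ltW e0).
have [a _ gain] := raises_A_mix l gainA.
apply: x_npar; exists (mix x x' l), a, (l * e); split=> //; last exact: mulr_gt0.
apply: feasible_le (feasible_mix (ltW l0) l1 (feasible_usage xf) x'f) _ _ => [j' t'|j'].
  by have := xsp j' t'; nra.
rewrite /s_relax; case: (boolP (j' == j)) => [/eqP->|_] /=; first nra.
by have := xs j'; nra.
Qed.

Lemma demanded_of_total j t : total_demanded j -> demanded j t.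
Proof.
move=> [x' [e [e0 gainA x'f]]]; exists x', e; split=> //.
by apply: feasible_le x'f _ _ => // j' t'; rewrite /sp_relax; case: (_ && _) => /=; lra.
Qed.

Definition A_value z := \sum_(p in A) \sum_(j < m) v p.1 j * z p.1 j p.2.

Definition demanded_flow z :=
  \sum_(p : I) \sum_(j < m) (if `[< demanded j p.2 >] then z p.1 j p.2 else 0).

Definition capacity j := if `[< total_demanded j >] then s j
  else \sum_(t < T) (if `[< demanded j t >] then sp j t else 0).

Lemma sum_U_in_A z : \sum_(p in A) U z p = A_value z - \sum_(p in A) d p.1 p.2.
Proof. by rewrite -sumrB. Qed.

Lemma A_value_le_flow z : feasible sp s z -> A_value z <= demanded_flow z.
Proof.
case=> z0 _ _; rewrite /A_value /demanded_flow big_mkcond /=.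
apply: ler_sum => -[i t] _ /=; case: ifP => itA; last first.
  by apply: sumr_ge0 => j _; case: ifP.
apply: ler_sum => j _; case: (hv i j) => vij; rewrite vij; first by rewrite mul0r; case: ifP.
by rewrite mul1r (asboolT (demanded_of_A itA vij)).
Qed.

Lemma A_value_eq_flow : A_value x = demanded_flow x.
Proof.
have [x0 _ _] := xf.
rewrite /A_value /demanded_flow big_mkcond /=; apply: eq_bigr => -[i t] _ /=.
case: ifP => itA; [apply: eq_bigr | rewrite big1 //] => j _.
  have := x0 i j t; rewrite le0r => /orP[/eqP-> | xpos]; first by rewrite mulr0; case: ifP.
  case: asboolP => [dj | ndj]; first by have [-> _] := demanded_alloc dj xpos; rewrite mul1r.
  by case: (hv i j) => vij; [rewrite vij mul0r | case: ndj; exact: demanded_of_A itA vij].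
have := x0 i j t; rewrite le0r => /orP[/eqP-> | xpos]; first by case: ifP.
case: asboolP => // dj; have [_ itA'] := demanded_alloc dj xpos.
by rewrite itA' in itA.
Qed.

Lemma demanded_flowE z : demanded_flow z =
  \sum_(j < m) \sum_(t < T) (if `[< demanded j t >] then period z j t else 0).
Proof.
rewrite /demanded_flow.
rewrite -(pair_bigA _ (fun i t => \sum_(j < m) (if `[< demanded j t >] then z i j t else 0))) /=.
under eq_bigr do rewrite exchange_big.
rewrite exchange_big; apply: eq_bigr => j _; rewrite exchange_big; apply: eq_bigr => t _.
by rewrite /period; case: ifP => _ //; rewrite big1.
Qed.

Lemma flow_le_capacity z j : feasible sp s z ->
  \sum_(t < T) (if `[< demanded j t >] then period z j t else 0) <= capacity j.
Proof.
case=> z0 zsp zs; rewrite /capacity; case: ifP => _.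
  apply: le_trans (zs j); apply: ler_sum => t _; case: ifP => _ //.
  by apply: sumr_ge0.
by apply: ler_sum => t _; case: ifP => _ //; exact: zsp.
Qed.

Lemma flow_eq_capacity j :
  \sum_(t < T) (if `[< demanded j t >] then period x j t else 0) = capacity j.
Proof.
have xsp t : period x j t <= sp j t by case: xf => _ + _; apply.
rewrite /capacity; case: asboolP => [tdj | ntdj].
  rewrite -(total_demanded_tight tdj); apply: eq_bigr => t _.
  by rewrite (asboolT (demanded_of_total t tdj)).
apply: eq_bigr => t _; case: asboolP => // dj.
apply/eqP; rewrite eq_le xsp /= leNgt; apply/negP => slack.
by apply: ntdj; exact: total_demanded_of_slack dj slack.
Qed.

Lemma sum_U_A_max y : feasible sp s y -> \sum_(p in A) U y p <= \sum_(p in A) U x p.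
Proof.
move=> yf; rewrite !sum_U_in_A lerD2r A_value_eq_flow; apply: le_trans (A_value_le_flow yf) _.
rewrite !demanded_flowE; apply: ler_sum => j _.
by rewrite flow_eq_capacity; exact: flow_le_capacity.
Qed.

End Cut.

Lemma lower_sets_optimal_of_unimprovable x : (forall i j, v i j = 0 \/ v i j = 1) ->
  feasible sp s x -> ~ pareto_improvable x -> ~ transfer_improvable x ->
  lower_sets_optimal x.
Proof. by move=> hv xf npar ntr A lowA y; exact: sum_U_A_max. Qed.

Lemma max_nash_welfare_of_lower_sets_optimal x :
  feasible sp s x -> all_pos v d x -> lower_sets_optimal x -> max_nash_welfare v d sp s x.
Proof.
move=> xf xpos xopt; split=> // y yf ypos.
have [xpos' ypos'] : (forall p, 0 < U x p) /\ (forall p, 0 < U y p) by split=> -[].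
rewrite !nash_welfareE ler_wpM2l ?invr_ge0 ?ler0n // -subr_le0 -sumrB.
apply: (@le_trans _ _ (\sum_p (U x p)^-1 * (U y p - U x p))).
  by apply: ler_sum => p _; rewrite mulrC ln_sub_le.
apply: (weighted_sum_le0 (u := U x)) => [A lowA | p | p q].
- by rewrite sumrB subr_le0; exact: xopt.
- by rewrite invr_ge0 ltW.
- by rewrite lef_pV2 ?posrE.
Qed.

Lemma leximin_optimal_of_lower_sets_optimal x :
  feasible sp s x -> lower_sets_optimal x -> leximin_optimal v d sp s x.
Proof.
move=> xf xopt; split=> // -[y [yf lexy]].
have [|c [sum_eq cnt_lt]] := leximin_gt_threshold _ lexy; first by rewrite !size_map.
rewrite !big_image in sum_eq.
set A := [set p | U x p <= c].
have lowA : lower_set (U x) A by move=> a b; rewrite !inE -ltNge; exact: le_lt_trans.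
have [p0 p0A p0y] : exists2 p, p \in A & c < U y p.
  apply/exists_inP; apply: contraTT cnt_lt => /exists_inPn none; rewrite -leqNgt !count_map.
  by apply: sub_count => p /= xp; have := none p; rewrite inE xp -leNgt; apply.
have ex : \sum_p Num.min (U x p) c = \sum_(p in A) U x p + \sum_(p | p \notin A) c.
  rewrite (bigID (mem A)) /=; congr (_ + _); apply: eq_bigr => p; rewrite inE => pA.
    by rewrite min_l.
  by rewrite min_r // ltW // ltNge.
have ey : \sum_p Num.min (U y p) c <=
          \sum_(p in A) Num.min (U y p) c + \sum_(p | p \notin A) c.
  by rewrite (bigID (mem A)) /= lerD2l; apply: ler_sum => p _; rewrite ge_min lexx orbT.
have ay : \sum_(p in A) Num.min (U y p) c < \sum_(p in A) U y p.
  rewrite (bigD1 p0) //= [X in _ < X](bigD1 p0) //=; apply: ltr_leD.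
    by rewrite min_r ?ltW.
  by apply: ler_sum => p _; rewrite ge_min lexx.
have := xopt A lowA y yf; lra.
Qed.

End Market.

Theorem corollary1 (R : realType) (n m T : nat)
  (v : 'I_n -> 'I_m -> R) (d : 'I_n -> 'I_T -> R)
  (sp : 'I_m -> 'I_T -> R) (s : 'I_m -> R)
  (hv : forall i j, v i j = 0 \/ v i j = 1)
  (hd : forall i t, 0 <= d i t)
  (hsp : forall j t, 0 <= sp j t)
  (hs : forall j, 0 <= s j)
  (hpos : exists x : alloc R n m T, feasible sp s x /\ all_pos v d x) :
  forall x : alloc R n m T,
    leximin_optimal v d sp s x <-> max_nash_welfare v d sp s x.
Proof.
move=> x; split=> [xlex | xmnw].
- have xf := xlex.1.
  apply: max_nash_welfare_of_lower_sets_optimal => //.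
    exact: leximin_optimal_all_pos hpos xlex.
  apply: lower_sets_optimal_of_unimprovable => //.
    exact: leximin_optimal_not_pareto.
  exact: leximin_optimal_not_transfer.
- have [xf _ _] := xmnw.
  apply: leximin_optimal_of_lower_sets_optimal => //.
  apply: lower_sets_optimal_of_unimprovable => //.
    exact: max_nash_welfare_not_pareto.
  exact: max_nash_welfare_not_transfer.
Qed.
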